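(* Let $\mathbb{K}=(G,M,I)$ be a finite formal context and let $\mathcal{I}_P=\bigcup_{B\in\mathcal{C}} pKey(B)$ be the set of all passkeys (of all closed itemsets) of $\mathbb{K}$. Then $\mathcal{I}_P$ is an order ideal of $(2^M,\subseteq)$: if $X\in\mathcal{I}_P$ and $Y\subseteq X$, then $Y\in\mathcal{I}_P$, i.e. $Y$ is a passkey of the closed itemset $Y''$.
   Context: A formal context is a triple $(G,M,I)$ with $I\subseteq G\times M$. For $A\subseteq G$, $A'=\{m\in M\mid \forall g\in A:(g,m)\in I\}$; for $B\subseteq M$, $B'=\{g\in G\mid \forall m\in B:(g,m)\in I\}$. An itemset $B\subseteq M$ is closed if $B''=B$; $\mathcal{C}$ denotes the set of all closed itemsets. For a closed itemset $B$, its equivalence class is $Equiv(B)=\{Y\subseteq B\mid Y'=B'\}$. A key of $B$ is an itemset $X\in Equiv(B)$ such that $Y'\neq X'$ for every proper subset $Y\subsetneq X$; $Key(B)$ is the set of keys of $B$. A passkey of $B$ is a key of $B$ of minimum cardinality among all keys of $B$; $pKey(B)=\{X\in Key(B)\mid |X|=\min_{Y\in Key(B)}|Y|\}$. An order ideal of a poset $(P,\le)$ is a subset $\mathcal{I}\subseteq P$ such that $x\in\mathcal{I}$ and $y\le x$ imply $y\in\mathcal{I}$. *)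

From mathcomp Require Import all_boot.
Set Implicit Arguments. Unset Strict Implicit. Unset Printing Implicit Defensive.

Section FCA.
Variables (G M : finType) (I : G -> M -> bool).

Definition fca_ext (B : {set M}) : {set G} := [set g | [forall m in B, I g m]].
Definition fca_int (A : {set G}) : {set M} := [set m | [forall g in A, I g m]].

Definition fca_closure (B : {set M}) : {set M} := fca_int (fca_ext B).
Definition fca_closed (B : {set M}) : bool := fca_closure B == B.

Definition Equiv (B : {set M}) : {set {set M}} :=
  [set Y : {set M} | (Y \subset B) && (fca_ext Y == fca_ext B)].

Definition Key (B : {set M}) : {set {set M}} :=
  [set X : {set M} in Equiv B | [forall Y : {set M}, (Y \proper X) ==> (fca_ext Y != fca_ext X)]].

Definition pKey (B : {set M}) : {set {set M}} :=
  [set X : {set M} in Key B | [forall Y : {set M} in Key B, #|X| <= #|Y|]].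

Definition passkeys : {set {set M}} :=
  \bigcup_(B | fca_closed B) pKey B.

End FCA.

Definition order_ideal (M : finType) (F : {set {set M}}) : Prop :=
  forall X Y : {set M}, X \in F -> Y \subset X -> Y \in F.

From mathcomp Require Import all_boot.
Set Implicit Arguments. Unset Strict Implicit. Unset Printing Implicit Defensive.

(* Being a key of B is the conjunction of two conditions: X lies in Equiv B
   (X is contained in B and has the same extent) and X is "free", i.e. no
   proper subset of X has the same extent.  Freeness only depends on X, is
   inherited by subsets, and every free Y is a key of its own closure Y''.

   For passkeys, let X be a passkey of a closed B and Y a subset of X, with
   D := X \ Y.  If some key Z of Y'' were smaller than Y, then Z u D would
   still have the extent of X (extents turn unions into intersections), hence
   lie in Equiv B; it contains a key K of B (shrink to a minimal-cardinality
   member of Equiv B), and |K| <= |Z| + |D| < |Y| + |D| = |X| contradicts the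
   minimality of X.  So Y is a passkey of the closed set Y'', which gives the
   theorem. *)

Lemma setU_diff (T : finType) (X Y : {set T}) : Y \subset X -> Y :|: (X :\: Y) = X.
Proof. by move=> YX; rewrite -{1}(setIidPr YX) setID. Qed.

Section PasskeyIdeal.
Variables (G M : finType) (I : G -> M -> bool).

Local Notation ext := (fca_ext I).
Local Notation closure := (fca_closure I).

Lemma ext_anti (A B : {set M}) : A \subset B -> ext B \subset ext A.
Proof.
move=> AB; apply/subsetP=> g; rewrite !inE => /forallP gB.
by apply/forallP=> m; apply/implyP=> mA; have := gB m; rewrite (subsetP AB).
Qed.

Lemma ext_setU (A B : {set M}) : ext (A :|: B) = ext A :&: ext B.
Proof.
apply/eqP; rewrite eqEsubset subsetI !ext_anti ?subsetUl ?subsetUr //=.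
apply/subsetP=> g; rewrite !inE => /andP[/forallP gA /forallP gB].
apply/forallP=> m; apply/implyP; rewrite inE => /orP[] mAB.
- by have := gA m; rewrite mAB.
- by have := gB m; rewrite mAB.
Qed.

Lemma subset_closure (B : {set M}) : B \subset closure B.
Proof.
apply/subsetP=> m mB; rewrite inE; apply/forallP=> g; apply/implyP.
by rewrite inE => /forallP/(_ m); rewrite mB.
Qed.

Lemma ext_closure (B : {set M}) : ext (closure B) = ext B.
Proof.
apply/eqP; rewrite eqEsubset ext_anti ?subset_closure //=.
apply/subsetP=> g gB; rewrite inE; apply/forallP=> m; apply/implyP.
by rewrite inE => /forallP/(_ g); rewrite gB.
Qed.

Lemma closure_mono (A B : {set M}) : A \subset B -> closure A \subset closure B.
Proof.
move=> AB; apply/subsetP=> m; rewrite !inE => /forallP mA.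
by apply/forallP=> g; apply/implyP=> gB; have := mA g; rewrite (subsetP (ext_anti AB)).
Qed.

Lemma closure_closed (B : {set M}) : fca_closed I (closure B).
Proof. by rewrite /fca_closed {1}/fca_closure ext_closure. Qed.

Lemma Equiv_closure (Y : {set M}) : Y \in Equiv I (closure Y).
Proof. by rewrite inE subset_closure ext_closure eqxx. Qed.

Lemma closure_sub_closed (B X Y : {set M}) :
  fca_closed I B -> X \in Equiv I B -> Y \subset X -> closure Y \subset B.
Proof.
move=> /eqP clB; rewrite inE => /andP[_ /eqP extX] YX.
rewrite -clB {2}/fca_closure -extX; exact: closure_mono.
Qed.

Definition free (X : {set M}) : bool :=
  [forall Y : {set M}, (Y \proper X) ==> (ext Y != ext X)].

Lemma KeyE (B X : {set M}) : (X \in Key I B) = (X \in Equiv I B) && free X.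
Proof. by rewrite inE. Qed.

(* Freeness is inherited by subsets: a proper subset Z of Y with the extent of
   Y would give the proper subset Z u (X \ Y) of X with the extent of X. *)
Lemma free_subset (X Y : {set M}) : free X -> Y \subset X -> free Y.
Proof.
move=> /forallP freeX YX; apply/forallP=> Z; apply/implyP=> ZY.
apply: contraTneq (freeX (Z :|: (X :\: Y))) => extZ.
have {2 4}-> : X = Y :|: (X :\: Y) by rewrite setU_diff.
rewrite !ext_setU extZ eqxx implybF negbK.
move/properP: ZY => [ZsubY [y yY yZ]].
apply/properP; split; first by rewrite setSU.
by exists y; rewrite !inE yY // (negbTE yZ).
Qed.

Lemma free_Key_closure (Y : {set M}) : free Y -> Y \in Key I (closure Y).
Proof. by move=> freeY; rewrite KeyE Equiv_closure. Qed.

(* Every member of Equiv B contains a key of B: take a member of Equiv B of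
   minimal cardinality below it. *)
Lemma Equiv_contains_Key (B W : {set M}) :
  W \in Equiv I B -> exists2 K, K \in Key I B & K \subset W.
Proof.
move=> WE.
pose below (K : {set M}) := (K \subset W) && (K \in Equiv I B).
have belowW : below W by rewrite /below subxx WE.
case: (arg_minnP (fun K : {set M} => #|K|) belowW) => K /andP[KW KE] Kmin.
exists K => //; rewrite KeyE KE; apply/forallP=> Y; apply/implyP=> YK.
apply/eqP=> extY.
have YE : Y \in Equiv I B.
  move: KE; rewrite !inE extY => /andP[KB ->].
  by rewrite (subset_trans (proper_sub YK) KB).
have := Kmin Y; rewrite /below (subset_trans (proper_sub YK) KW) YE => /(_ isT).
by rewrite leqNgt proper_card.
Qed.

Lemma Equiv_exchange (B X Y Z : {set M}) :
  fca_closed I B -> X \in Equiv I B -> Y \subset X ->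
  Z \in Equiv I (closure Y) -> Z :|: (X :\: Y) \in Equiv I B.
Proof.
move=> clB XE YX; rewrite inE ext_closure => /andP[ZY /eqP extZ].
have YB := closure_sub_closed clB XE YX.
move: XE; rewrite !inE => /andP[XB /eqP <-].
rewrite subUset (subset_trans ZY YB) (subset_trans (subsetDl X Y) XB) /=.
by rewrite ext_setU extZ -ext_setU setU_diff.
Qed.

Lemma pKey_subset (B X Y : {set M}) :
  fca_closed I B -> X \in pKey I B -> Y \subset X -> Y \in pKey I (closure Y).
Proof.
move=> clB; rewrite inE KeyE => /andP[/andP[XE freeX] /forallP Xmin] YX.
rewrite inE free_Key_closure ?(free_subset freeX) //=.
apply/forallP=> Z; apply/implyP; rewrite KeyE => /andP[ZE _].
rewrite leqNgt; apply/negP=> ZY.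
have [K KK KZD] := Equiv_contains_Key (Equiv_exchange clB XE YX ZE).
have cardX : #|X| = #|Y| + #|X :\: Y| by rewrite cardsDS // subnKC ?subset_leq_card.
have : #|K| < #|X|.
  apply: leq_ltn_trans (subset_leq_card KZD) _.
  by apply: leq_ltn_trans (leq_card_setU _ _) _; rewrite cardX ltn_add2r.
by rewrite ltnNge; move/implyP: (Xmin K) => ->.
Qed.

Lemma passkeys_subset (X Y : {set M}) :
  X \in passkeys I -> Y \subset X -> Y \in pKey I (closure Y).
Proof. by move=> /bigcupP[B clB XB] YX; apply: pKey_subset XB YX. Qed.

End PasskeyIdeal.

Theorem proposition2 (G M : finType) (I : G -> M -> bool) :
  order_ideal (passkeys I) /\
  (forall X Y : {set M}, X \in passkeys I -> Y \subset X ->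
     Y \in passkeys I /\ Y \in pKey I (fca_closure I Y)).
Proof.
have ideal : order_ideal (passkeys I).
  move=> X Y XP YX; apply/bigcupP; exists (fca_closure I Y).
    exact: closure_closed.
  exact: passkeys_subset XP YX.
split=> // X Y XP YX; split; first exact: ideal XP YX.
exact: passkeys_subset XP YX.
Qed.
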